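(* Let $P\subset\mathbb R^d$ be a rational $d$-polytope, $\bm a\in N(P)$, and $F$ the facet of $P$ with inner normal vector $\bm a$. Let $k\in\mathbb Z$ and let $\bm v\in H_{\bm a,k}$ be generic in $\mathcal A_P$, i.e. $\bm v\notin H$ for every $H\in\mathcal A_P$ with $H\neq H_{\bm a,k}$. Then for every sufficiently small $\varepsilon>0$: (1) $\mathrm{TL}_{P,\bm v}(t)-\mathrm{TL}_{P,\bm v+\varepsilon\bm a}(t)=\mathrm{TL}_{F,\bm v}(t)$ for all $t\in\mathbb Z_{\ge0}$, and $\mathrm{TL}_{F,\bm v}$ is not identically zero; (2) if there is no real $c>0$ with $-c\bm a\in N(P)$, then $\mathrm{TL}_{P,\bm v}(t)=\mathrm{TL}_{P,\bm v-\varepsilon\bm a}(t)$ for all $t\in\mathbb Z_{\ge0}$.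
   Context: $P=\bigcap_{i=1}^m\{\bm x:(\bm a_i,\bm x)\ge b_i\}$ is the unique irredundant presentation with $(\bm a_i,b_i)\in\mathbb Z^{d+1}$ primitive; $N(P)=\{\bm a_1,\dots,\bm a_m\}$, and the facet with normal $\bm a_i$ is $P\cap\{(\bm a_i,\bm x)=b_i\}$. $H_{\bm a,k}=\{\bm x:(\bm a,\bm x)=k\}$, $\mathcal A_P=\{H_{\bm a_i,k}:i\le m,k\in\mathbb Z\}$. $\mathrm{TL}_{X,\bm v}(t)=\#((tX+\bm v)\cap\mathbb Z^d)$. *)

From HB Require Import structures.
From mathcomp Require Import all_boot all_order all_algebra.
From mathcomp Require Import finmap.
From mathcomp Require Import all_classical all_reals all_analysis.
Set Implicit Arguments. Unset Strict Implicit. Unset Printing Implicit Defensive.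
Import Order.TTheory GRing.Theory Num.Theory.
Import numFieldNormedType.Exports.
Local Open Scope ring_scope.
Local Open Scope classical_set_scope.

Definition dotR (R : numDomainType) (d : nat) (a x : 'rV[R]_d) : R :=
  \sum_(i < d) a 0 i * x 0 i.

Definition intv (R : numDomainType) (d : nat) (z : 'rV[int]_d) : 'rV[R]_d :=
  map_mx (fun n : int => n%:~R) z.
Arguments intv R {d} z.

Definition hyperplane (R : numDomainType) (d : nat) (a : 'rV[int]_d) (k : int)
  : set 'rV[R]_d := [set x | dotR (intv R a) x = k%:~R].
Arguments hyperplane R {d} a k.

Definition polyhedron (R : numDomainType) (d m : nat) (A : 'I_m -> 'rV[int]_d)
  (b : 'I_m -> int) : set 'rV[R]_d :=
  [set x | forall i, (b i)%:~R <= dotR (intv R (A i)) x].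
Arguments polyhedron R {d m} A b.

Definition primitive (d : nat) (a : 'rV[int]_d) (b : int) : Prop :=
  forall c : int, (c %| b)%Z -> (forall i, (c %| a ord0 i)%Z) -> `|c| = 1.

Definition irredundant (R : numDomainType) (d m : nat) (A : 'I_m -> 'rV[int]_d)
  (b : 'I_m -> int) : Prop :=
  forall i0 : 'I_m,
    [set x : 'rV[R]_d | forall i, i != i0 -> (b i)%:~R <= dotR (intv R (A i)) x]
    <> polyhedron R A b.
Arguments irredundant R {d m} A b.

Definition TL (R : numDomainType) (d : nat) (X : set 'rV[R]_d) (v : 'rV[R]_d)
  (t : nat) : nat :=
  #|` fset_set [set z : 'rV[int]_d | exists2 x, X x & intv R z = t%:R *: x + v] |.

From HB Require Import structures.
From mathcomp Require Import all_boot all_order all_algebra.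
From mathcomp Require Import finmap.
From mathcomp Require Import all_classical all_reals all_analysis.
From mathcomp Require Import ring lra zify.

(* For t > 0 a lattice point z lies in tP + w iff (a_j, w) <= (a_j, z) - b_j t for
   every j, so TL_{P,w}(t) only depends on which integers lie above each level
   (a_j, w).  By genericity, the level (a_j, v) is an integer only when a_j = a or
   a_j is a negative multiple of a.  Hence for small eps the shift v -> v + eps a
   keeps every threshold except that of a, where "k <= N" becomes "k < N": exactly
   the lattice points of tF + v are lost.  The shift v -> v - eps a keeps all
   thresholds unless some normal is opposite to a.  The facet does carry lattice
   points: primitivity of (a, b_a) makes every level b_a t + k attainable by a
   lattice point, and for large t one is found close to t q + v, q a relative
   interior point of F. *)

Set Implicit Arguments.
Unset Strict Implicit.
Unset Printing Implicit Defensive.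

Import Order.TTheory GRing.Theory Num.Theory.
Import numFieldNormedType.Exports.
Local Open Scope ring_scope.
Local Open Scope classical_set_scope.

Section DotProduct.
Variables (R : numDomainType) (d : nat).
Implicit Types (a x y : 'rV[R]_d).

Lemma dotRD a x y : dotR a (x + y) = dotR a x + dotR a y.
Proof. by rewrite /dotR -big_split; apply: eq_bigr => i _; rewrite mxE mulrDr. Qed.

Lemma dotRZ a c x : dotR a (c *: x) = c * dotR a x.
Proof. by rewrite /dotR mulr_sumr; apply: eq_bigr => i _; rewrite mxE mulrCA. Qed.

Lemma dotRN a x : dotR a (- x) = - dotR a x.
Proof. by rewrite -scaleN1r dotRZ mulN1r. Qed.

Lemma dotRB a x y : dotR a (x - y) = dotR a x - dotR a y.
Proof. by rewrite dotRD dotRN. Qed.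

Lemma dotRZl a c x : dotR (c *: a) x = c * dotR a x.
Proof. by rewrite /dotR mulr_sumr; apply: eq_bigr => i _; rewrite mxE mulrA. Qed.

Lemma dotR_delta a p : dotR a (delta_mx 0 p) = a 0 p.
Proof.
rewrite /dotR (bigD1 p) //= big1 ?addr0; first by rewrite mxE !eqxx mulr1.
by move=> i ip; rewrite mxE (negbTE ip) andbF mulr0.
Qed.

Lemma dotR_entry_bound a x (B : R) : (forall i, `|x 0 i| <= B) ->
  `|dotR a x| <= (\sum_i `|a 0 i|) * B.
Proof.
move=> xB; rewrite mulr_suml; apply: le_trans (ler_norm_sum _ _ _) (ler_sum _ _) => i _.
by rewrite normrM ler_wpM2l.
Qed.

End DotProduct.

Lemma dotR_sqr_gt0 (R : realDomainType) d (a : 'rV[R]_d) : a != 0 -> 0 < dotR a a.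
Proof.
move=> /rV0Pn[p ap].
rewrite /dotR (bigD1 p) //= ltr_pwDl ?sumr_ge0 // => [|i _]; last by rewrite -expr2 sqr_ge0.
by rewrite -expr2 lt_def sqr_ge0 andbT sqrf_eq0.
Qed.

Lemma dotR_intv (R : numDomainType) d (a z : 'rV[int]_d) :
  dotR (intv R a) (intv R z) = (dotR a z)%:~R.
Proof. by rewrite /dotR rmorph_sum; apply: eq_bigr => i _; rewrite !mxE rmorphM. Qed.

Lemma intv_eq0 (R : numDomainType) d (a : 'rV[int]_d) : (intv R a == 0) = (a == 0).
Proof.
apply/eqP/eqP => [/rowP a0|->]; apply/rowP => i; last by rewrite !mxE.
by have := a0 i; rewrite !mxE => /eqP; rewrite intr_eq0 => /eqP.
Qed.

Lemma eq_hyperplane_parallel (R : numFieldType) d (a a' v : 'rV[R]_d) (n n' : R) :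
  a != 0 -> [set x | dotR a' x = n'] = [set x | dotR a x = n] -> dotR a v = n ->
  exists2 c, c != 0 & a' = c *: a.
Proof.
move=> /rV0Pn[p ap] H av.
have H' x : dotR a' x = n' <-> dotR a x = n by rewrite -[_ = n']/([set x | _] x) H.
have a'v : dotR a' v = n' by apply/H'.
have a'_ker w : dotR a w = 0 -> dotR a' w = 0.
  move=> aw; have /H' : dotR a (v + w) = n by rewrite dotRD aw addr0.
  by rewrite dotRD a'v => a'vw; apply: (addrI n'); rewrite a'vw addr0.
pose c := a' 0 p / a 0 p.
have a'E : a' = c *: a.
  apply/rowP => i; rewrite mxE; apply/eqP; rewrite -subr_eq0; apply/eqP.
  have := a'_ker (delta_mx 0 i - (a 0 i / a 0 p) *: delta_mx 0 p).
  rewrite !dotRB !dotRZ !dotR_delta mulfVK // subrr => /(_ erefl) <-.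
  by rewrite /c; ring.
exists c => //; apply: contraTneq isT => c0; move: a'E; rewrite c0 scale0r => a'0.
have /H' : dotR a' (v + (a 0 p)^-1 *: delta_mx 0 p) = n'.
  by rewrite -a'v a'0 /dotR !big1 // => i _; rewrite mxE mul0r.
rewrite dotRD dotRZ dotR_delta mulVf // av => /eqP.
by rewrite -subr_eq0 addrAC subrr add0r oner_eq0.
Qed.

Section IntegerThresholds.
Variable R : realType.

Lemma ler_int_between (f N : int) (y : R) :
  f%:~R < y < (f + 1)%:~R -> (y <= N%:~R) = (f < N).
Proof.
move=> /andP[fy yf1]; case: (ltrP f N) => [fN|Nf].
  by apply: le_trans (ltW yf1) _; rewrite ler_int lezD1.
by apply/negbTE; rewrite -ltNge; apply: le_lt_trans fy; rewrite ler_int.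
Qed.

Lemma ler_int_addr (k N : int) (e : R) : 0 < e < 1 -> (k%:~R + e <= N%:~R) = (k < N).
Proof. by move=> /andP[e0 e1]; apply: ler_int_between; rewrite intrD; lra. Qed.

Lemma ler_int_subr (k N : int) (e : R) : 0 < e < 1 -> (k%:~R - e <= N%:~R) = (k <= N).
Proof.
by move=> /andP[e0 e1]; rewrite (@ler_int_between (k - 1)) ?subrK ?intrB; [lia | lra].
Qed.

Lemma int_addr_neq (k n : int) (e : R) : 0 < e < 1 -> k%:~R + e != n%:~R.
Proof.
move=> e01; apply/eqP => kn.
have nk : (n - k)%:~R = e :> R by rewrite intrB -kn addrAC subrr add0r.
by move: e01; rewrite -nk ltr0z ltrz1; lia.
Qed.

Lemma near_ler_int (x : R) : (forall n : int, x != n%:~R) ->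
  \forall y \near x, forall N : int, (y <= N%:~R) = (x <= N%:~R).
Proof.
move=> x_notZ; set f := Num.floor x.
have fx : f%:~R < x < (f + 1)%:~R.
  by rewrite floorD1_gt andbT lt_neqAle floor_le andbT eq_sym x_notZ.
near=> y => N; rewrite !(ler_int_between N fx).
apply: ler_int_between; near: y; exact: near_in_itvoo.
Unshelve. all: by end_near. Qed.

End IntegerThresholds.

Section NearZero.
Variable R : realType.

Lemma near0_affine (x c : R) (Q : R -> Prop) :
  (\forall y \near x, Q y) -> \forall e \near 0, Q (x + e * c).
Proof.
move=> /nbhs0P Qx.
have cvg_scale : (fun e : R => e * c) @ 0 --> 0 * c by apply: cvgMr_tmp; exact: cvg_id.
by rewrite mul0r in cvg_scale; exact: cvg_scale _ Qx.
Qed.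

Lemma near0_right_mulr_itv01 (l : R) : 0 < l -> \forall e \near 0^'+, 0 < e * l < 1.
Proof.
move=> l_gt0; have l_inv_gt0 : 0 < 1 / l by rewrite divr_gt0.
near=> e; apply/andP; split.
  by apply: mulr_gt0 l_gt0; near: e; exact: nbhs_right_gt.
by rewrite -ltr_pdivlMr //; near: e; exact: nbhs_right_lt.
Unshelve. all: by end_near. Qed.

Lemma near0_right_exists (P : R -> Prop) :
  (\forall e \near 0^'+, P e) -> exists2 e0 : R, 0 < e0 & forall e, 0 < e < e0 -> P e.
Proof.
move=> /nbhs_ballP[e0 /= e0_gt0 Pe]; exists e0 => // e /andP[e_gt0 e_lt].
by apply: Pe => //; rewrite /ball /= sub0r normrN gtr0_norm.
Qed.

End NearZero.

Section IntegerLinearForm.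
Variables (d : nat) (a : 'rV[int]_d).
Hypothesis a_neq0 : a != 0.

Lemma dotR_ideal_generator : exists2 g : int, 0 < g &
  (exists zg, dotR a zg = g) /\ forall z, (g %| dotR a z)%Z.
Proof.
have [p ap] := rV0Pn _ a_neq0.
have ex_pos : exists n : nat, (0 < n)%N && `[< exists z, dotR a z = n%:Z >].
  exists (absz (a 0 p)); rewrite absz_gt0 ap; apply/asboolP.
  by exists (sgz (a 0 p) *: delta_mx 0 p); rewrite dotRZ dotR_delta abszEsg.
case: (ex_minnP ex_pos) => g /andP[g_gt0 /asboolP[zg azg]] g_min.
exists g%:Z; first by rewrite ltz_nat.
split=> [|z]; first by exists zg.
have g_neq0 : g%:Z != 0 by rewrite eqz_nat -lt0n.
set r := (dotR a z %% g%:Z)%Z.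
have ar : dotR a (z - (dotR a z %/ g%:Z)%Z *: zg) = r.
  by rewrite dotRB dotRZ azg {1}(divz_eq (dotR a z) g%:Z) addrAC subrr add0r.
apply/dvdz_mod0P/eqP; apply: contraT => r_neq0.
have r_ge0 : 0 <= r := modz_ge0 _ g_neq0.
have r_lt : r < g%:Z by apply: ltz_pmod; rewrite ltz_nat.
have : (g <= `|r|)%N.
  apply: g_min; rewrite absz_gt0 r_neq0; apply/asboolP.
  by exists (z - (dotR a z %/ g%:Z)%Z *: zg); rewrite ar gez0_abs.
by move: r_lt; rewrite -(gez0_abs r_ge0) ltz_nat; lia.
Qed.

(* Primitivity gives Bezout coefficients u g + w b = 1, g the generator above; then
   t = s g - k w satisfies b t + k = g (s b + k u) for every s. *)
Lemma primitive_levels (b : int) : primitive a b ->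
  forall (T : nat) (k : int), exists t : nat, (T < t)%N /\ exists z, dotR a z = b * t%:Z + k.
Proof.
move=> prim T k; have [g g_gt0 [[zg azg] g_dvd]] := dotR_ideal_generator.
have gb1 : gcdz g b = 1.
  rewrite -[LHS]gez0_abs //; apply: prim; first exact: dvdz_gcdr.
  by move=> i; apply: dvdz_trans (dvdz_gcdl g b) _; rewrite -dotR_delta g_dvd.
have [u [w uw]] := Bezoutz g b; rewrite gb1 in uw.
set s : int := T%:Z + 1 + `|k * w|.
set t : int := s * g - k * w.
have s_ge0 : 0 <= s by rewrite /s; have := normr_ge0 (k * w); lia.
have s_le : s <= s * g by rewrite ler_peMr //; lia.
have T_lt : T%:Z < t by rewrite /t; have := ler_norm (k * w); lia.
exists `|t|%N; split; first by rewrite -ltz_nat gez0_abs //; lia.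
exists ((s * b + k * u) *: zg); rewrite dotRZ azg gez0_abs; last by lia.
apply/eqP; rewrite -subr_eq0.
have -> : (s * b + k * u) * g - (b * t + k) = k * (u * g + w * b - 1) by rewrite /t; ring.
by rewrite uw subrr mulr0.
Qed.

(* Round [y - z0] off p to multiples of [a_p], then correct coordinate p to
   restore the level; the error at p is controlled because (a, z - y) = 0. *)
Lemma dotR_level_approx (R : realType) : exists2 B : R, 0 <= B &
  forall (n : int) (y : 'rV[R]_d), dotR (intv R a) y = n%:~R ->
  (exists z0, dotR a z0 = n) ->
  exists z, dotR a z = n /\ forall i, `|(intv R z - y) 0 i| <= B.
Proof.
have [p ap] := rV0Pn _ a_neq0.
set aR := intv R a; set apR : R := (a 0 p)%:~R.
have apR_neq0 : apR != 0 by rewrite intr_eq0.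
have aRp : aR 0 p = apR by rewrite mxE.
exists (`|apR| + \sum_i `|aR 0 i|); first by rewrite addr_ge0 // sumr_ge0.
move=> n y ay [z0 az0].
pose f : 'rV[int]_d :=
  \row_i (if i == p then 0 else Num.floor ((y 0 i - (z0 0 i)%:~R) / apR)).
set z := z0 + a 0 p *: f - dotR a f *: delta_mx 0 p.
have az : dotR a z = n.
  by rewrite /z dotRB dotRD !dotRZ dotR_delta az0 [_ * dotR a f]mulrC addrK.
exists z; split => //; set D := intv R z - y.
have D_off : forall i, i != p -> `|D 0 i| <= `|apR|.
  move=> i ip; rewrite /D /z !mxE (negbTE ip) andbF mulr0 subr0 /=.
  set q := (y 0 i - (z0 0 i)%:~R) / apR.
  have -> : (z0 0 i + a 0 p * Num.floor q)%:~R - y 0 i = apR * ((Num.floor q)%:~R - q).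
    by rewrite /q intrD intrM -/apR; field.
  rewrite normrM ler_piMr // ler_norml; move: (floor_itv q); rewrite intrD; lra.
have aD : dotR aR D = 0 by rewrite /D dotRB dotR_intv az ay subrr.
rewrite /dotR (bigD1 p) //= aRp in aD.
have D_p : `|apR| * `|D 0 p| <= `|apR| * \sum_(i < d | i != p) `|aR 0 i|.
  rewrite -normrM (_ : apR * _ = - \sum_(i < d | i != p) aR 0 i * D 0 i); last by lra.
  rewrite normrN mulr_sumr; apply: le_trans (ler_norm_sum _ _ _) (ler_sum _ _) => i ip.
  by rewrite normrM mulrC; apply: ler_wpM2r => //; exact: D_off.
rewrite ler_pM2l ?normr_gt0 // in D_p.
have sum_le : \sum_(i < d | i != p) `|aR 0 i| <= \sum_i `|aR 0 i|.
  by rewrite [X in _ <= X](bigD1 p) //= lerDr.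
move=> i; case: (eqVneq i p) => [->|ip].
  by apply: le_trans D_p _; apply: le_trans sum_le _; rewrite lerDr.
by apply: le_trans (D_off i ip) _; rewrite lerDl sumr_ge0.
Qed.

End IntegerLinearForm.

Lemma card_fset_setUI (T : choiceType) (S S1 S2 : set T) : finite_set S ->
  S = S1 `|` S2 -> S1 `&` S2 = set0 ->
  #|` fset_set S| = (#|` fset_set S1| + #|` fset_set S2|)%N.
Proof.
move=> finS SE S12; move: finS; rewrite SE finite_setU => -[fin1 fin2].
by rewrite fset_setU // -cardfsUI -fset_setI // S12 fset_set0 cardfs0 addn0.
Qed.

Lemma mx_entry_le_norm (R : realType) m n (x : 'M[R]_(m, n)) i j : `|x i j| <= `|x|.
Proof. by rewrite [X in _ <= X]/Num.norm /= mx_normrE; exact: (le_bigmax _ _ (i, j)). Qed.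

Lemma bounded_set_norm_le (R : realType) d (X : set 'rV[R]_d) :
  bounded_set X -> exists M : R, forall x, X x -> `|x| <= M.
Proof. by move=> [M [_ XM]]; exists (M + 1) => x Xx; apply: XM; rewrite ?ltrDl. Qed.

Lemma finite_int_box d (N : nat) :
  finite_set [set z : 'rV[int]_d | forall i, (absz (z 0%R i) <= N)%N].
Proof.
pose g (f : {ffun 'I_d -> 'I_N.*2.+1}) : 'rV[int]_d := \row_i ((f i)%:Z - N%:Z).
apply: (@sub_finite_set _ _ (g @` setT)); last exact: finite_image finite_finset.
move=> z /= zN.
exists [ffun i => inord (absz (z 0 i + N%:Z))] => //.
apply/rowP => i; rewrite mxE ffunE inordK; have := zN i.
  by move=> ziN; rewrite gez0_abs; lia.
by lia.
Qed.

Definition lattice_points (R : numDomainType) d (X : set 'rV[R]_d) (v : 'rV[R]_d)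
  (t : nat) : set 'rV[int]_d :=
  [set z | exists2 x, X x & intv R z = t%:R *: x + v].

Lemma TLE (R : numDomainType) d (X : set 'rV[R]_d) v t :
  TL X v t = #|` fset_set (lattice_points X v t)|.
Proof. by []. Qed.

Section LatticePoints.
Variables (R : realType) (d : nat) (X : set 'rV[R]_d) (v : 'rV[R]_d).

Lemma lattice_points0 : X !=set0 -> lattice_points X v 0 = [set z | intv R z = v].
Proof.
move=> [x0 Xx0]; apply/seteqP; split=> z /=; first by case=> x _ ->; rewrite scale0r add0r.
by move=> zv; exists x0; rewrite // zv scale0r add0r.
Qed.

Lemma lattice_pointsP t z : (0 < t)%N ->
  lattice_points X v t z <-> X (t%:R^-1 *: (intv R z - v)).
Proof.
move=> t_gt0; have tR_neq0 : t%:R != 0 :> R by rewrite pnatr_eq0 -lt0n.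
split=> [[x Xx ->]|Xx]; first by rewrite addrK scalerA mulVf // scale1r.
by exists (t%:R^-1 *: (intv R z - v)); rewrite // scalerA mulfV // scale1r subrK.
Qed.

Lemma finite_lattice_points t : bounded_set X -> finite_set (lattice_points X v t).
Proof.
move=> /bounded_set_norm_le[M XM]; set N := Num.bound (t%:R * M + `|v|).
apply: sub_finite_set (finite_int_box d N) => z [x Xx zx] i.
have M_ge0 : 0 <= M by apply: le_trans (XM x Xx).
have z_le : `|(z 0 i)%:~R| <= t%:R * M + `|v| :> R.
  rewrite (_ : (z 0 i)%:~R = (t%:R *: x + v) 0 i); last by rewrite -zx mxE.
  rewrite !mxE; apply: le_trans (ler_normD _ _) (lerD _ (mx_entry_le_norm _ _ _)).
  rewrite normrM ger0_norm // ler_wpM2l //.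
  exact: le_trans (mx_entry_le_norm _ _ _) (XM x Xx).
have : (absz (z 0 i))%:R < N%:R :> R.
  rewrite natr_absz intr_norm; apply: le_lt_trans z_le _.
  by apply: archi_boundP; rewrite addr_ge0 // mulr_ge0.
by rewrite ltr_nat => /ltnW.
Qed.

End LatticePoints.

Section ScaledPolyhedron.
Variables (R : realType) (d : nat).

Lemma dotR_scaled_lattice (a z : 'rV[int]_d) (w : 'rV[R]_d) (s : R) :
  dotR (intv R a) (s *: (intv R z - w)) = s * ((dotR a z)%:~R - dotR (intv R a) w).
Proof. by rewrite dotRZ dotRB dotR_intv. Qed.

Lemma lattice_points_polyhedron m (A : 'I_m -> 'rV[int]_d) b w t z : (0 < t)%N ->
  lattice_points (polyhedron R A b) w t z <->
  forall j, dotR (intv R (A j)) w <= (dotR (A j) z - b j * t%:Z)%:~R.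
Proof.
move=> t_gt0; have tR_gt0 : 0 < t%:R :> R by rewrite ltr0n.
rewrite lattice_pointsP //; split=> Pz j; have := Pz j;
  by rewrite dotR_scaled_lattice ler_pdivlMl // intrB intrM; lra.
Qed.

Lemma lattice_points_hyperplane (a : 'rV[int]_d) c w t z : (0 < t)%N ->
  lattice_points (hyperplane R a c) w t z <->
  dotR (intv R a) w = (dotR a z - c * t%:Z)%:~R.
Proof.
move=> t_gt0; have tR_neq0 : t%:R != 0 :> R by rewrite pnatr_eq0 -lt0n.
rewrite lattice_pointsP // /hyperplane /= dotR_scaled_lattice intrB intrM.
split=> [zw|->]; last by field.
by have := congr1 ( *%R t%:R) zw; rewrite mulrA mulfV // mul1r; lra.
Qed.

End ScaledPolyhedron.

Lemma lattice_pointsI (R : realType) d (X Y : set 'rV[R]_d) w t z : (0 < t)%N ->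
  lattice_points (X `&` Y) w t z <-> lattice_points X w t z /\ lattice_points Y w t z.
Proof. by move=> t_gt0; rewrite !lattice_pointsP. Qed.

Section Polytope.
Variables (R : realType) (d m : nat) (A : 'I_m -> 'rV[int]_d) (b : 'I_m -> int).
Hypothesis Hirr : irredundant R A b.
Hypothesis Hfull : (polyhedron R A b)° !=set0.

Local Notation P := (polyhedron R A b).
Local Notation lr j := (dotR (intv R (A j))).

Lemma polyhedron_neq0 : P !=set0.
Proof. by have [x /interior_subset Px] := Hfull; exists x. Qed.

Lemma irredundant_witness j :
  exists2 x, (forall i, i != j -> (b i)%:~R <= lr i x) & lr j x < (b j)%:~R.
Proof.
apply: contrapT => no_x; apply: (@Hirr j); apply/seteqP; split=> x /= Px i;
  last by move=> _; exact: Px.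
have [->|ij] := eqVneq i j; last exact: Px.
by rewrite leNgt; apply/negP => xj; apply: no_x; exists x.
Qed.

Lemma normal_neq0 j : A j != 0.
Proof.
apply/eqP => Aj0; have [x _] := irredundant_witness j; have [y Py] := polyhedron_neq0.
have lr0 z : lr j z = 0 by rewrite Aj0 /dotR big1 // => i _; rewrite !mxE mul0r.
by rewrite !lr0 => /lt_le_trans/(_ (Py j)); rewrite lr0 ltxx.
Qed.

Lemma normals_not_positively_parallel j1 j2 (c : R) :
  j1 != j2 -> 0 < c -> intv R (A j1) != c *: intv R (A j2).
Proof.
move=> j12 c_gt0; apply/eqP => A12.
have lr12 x : lr j1 x = c * lr j2 x by rewrite A12 dotRZl.
have [b12|b21] := lerP (b j1)%:~R (c * (b j2)%:~R).
  have [x Px] := irredundant_witness j1.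
  by have := Px j2; rewrite eq_sym j12 lr12 => /(_ isT); nra.
have [x Px] := irredundant_witness j2; have := Px j1 j12; rewrite lr12; nra.
Qed.

Lemma strict_interior_point : exists x, forall j, (b j)%:~R < lr j x.
Proof.
have [x0 /nbhs_ballP[e /= e_gt0 ballP]] := Hfull; exists x0 => j.
rewrite ltNge; apply/negP => x0j; set u := intv R (A j).
have u_neq0 : u != 0 by rewrite intv_eq0 normal_neq0.
have u_gt0 : 0 < `|u| by rewrite normr_gt0.
set s := e / (2 * `|u|).
have s_gt0 : 0 < s by rewrite divr_gt0 // mulr_gt0.
have : P (x0 - s *: u).
  apply: ballP; rewrite -ball_normE /ball_ /= opprB addrC subrK normrZ gtr0_norm //.
  have -> : s * `|u| = e / 2 by rewrite /s; field; rewrite gt_eqF.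
  lra.
move/(_ j); rewrite dotRB dotRZ -/u.
have := mulr_gt0 s_gt0 (dotR_sqr_gt0 u_neq0); lra.
Qed.

(* A point on the segment from a strict interior point to a point that violates only
   the [i]-th inequality. *)
Lemma facet_relint_point i : exists q,
  lr i q = (b i)%:~R /\ forall j, j != i -> (b j)%:~R < lr j q.
Proof.
have [p Pp] := strict_interior_point; have [y Py yi] := irredundant_witness i.
have pi := Pp i; set lam := (lr i p - (b i)%:~R) / (lr i p - lr i y).
have d_gt0 : 0 < lr i p - lr i y by lra.
have lam_gt0 : 0 < lam by rewrite divr_gt0 // subr_gt0.
have lam_lt1 : lam < 1 by rewrite ltr_pdivrMr // mul1r; lra.
exists (p + lam *: (y - p)); split=> [|j ji]; rewrite dotRD dotRZ dotRB.
  by rewrite /lam; field; rewrite gt_eqF.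
have := Pp j; have := Py j ji => yj pj.
have : 0 < (1 - lam) * (lr j p - (b j)%:~R) by rewrite mulr_gt0 // subr_gt0.
have : 0 <= lam * (lr j y - (b j)%:~R) by rewrite mulr_ge0 ?subr_ge0 // ltW.
lra.
Qed.

End Polytope.

Section GenericPoint.
Variables (R : realType) (d m : nat) (A : 'I_m -> 'rV[int]_d) (b : 'I_m -> int).
Hypothesis Hirr : irredundant R A b.
Hypothesis Hfull : (polyhedron R A b)° !=set0.
Hypothesis Hbdd : bounded_set (polyhedron R A b).
Variables (i0 : 'I_m) (k : int) (v : 'rV[R]_d).
Hypothesis Hv : hyperplane R (A i0) k v.
Hypothesis Hgen : forall (j : 'I_m) (k' : int),
  hyperplane R (A j) k' <> hyperplane R (A i0) k -> ~ hyperplane R (A j) k' v.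

Local Notation P := (polyhedron R A b).
Local Notation F := (P `&` hyperplane R (A i0) (b i0)).
Local Notation a := (intv R (A i0)).
Local Notation lr j := (dotR (intv R (A j))).
Local Notation opposite_normal :=
  (exists (j : 'I_m) (c : R), 0 < c /\ intv R (A j) = - (c *: a)).

Lemma dotR_normal_gt0 : 0 < lr i0 a.
Proof. by rewrite dotR_sqr_gt0 // intv_eq0 (normal_neq0 Hirr Hfull). Qed.

Lemma facet_neq0 : F !=set0.
Proof.
have [q [qi qj]] := facet_relint_point Hirr Hfull i0; exists q; split=> // j.
by have [->|ji] := eqVneq j i0; [rewrite qi | exact/ltW/qj].
Qed.

Lemma integral_level_opposite_normal j (n : int) : lr j v = n%:~R -> j != i0 ->
  exists2 c : R, c < 0 & intv R (A j) = c *: a.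
Proof.
move=> vj ji; have Hj : hyperplane R (A j) n = hyperplane R (A i0) k.
  by apply: contrapT => Hneq; exact: Hgen Hneq vj.
have [|c c_neq0 Aj] := eq_hyperplane_parallel _ Hj Hv.
  by rewrite intv_eq0 (normal_neq0 Hirr Hfull).
exists c => //; rewrite lt_neqAle c_neq0 leNgt /=; apply/negP => c_gt0.
by have /eqP := normals_not_positively_parallel Hirr ji c_gt0.
Qed.

Lemma near_nonintegral_level j (c : R) : ~ (exists n : int, lr j v = n%:~R) ->
  \forall eps \near 0^'+, forall N : int, (lr j v + eps * c <= N%:~R) = (lr j v <= N%:~R).
Proof.
move=> vZ; have : forall n : int, lr j v != n%:~R.
  by move=> n; apply/eqP => vn; apply: vZ; exists n.
by move=> /near_ler_int/(near0_affine c); exact: cvg_within.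
Qed.

Lemma near_levels_plus : \forall eps \near 0^'+, forall j (N : int),
  (lr j (v + eps *: a) <= N%:~R) = (if j == i0 then k < N else lr j v <= N%:~R).
Proof.
apply: filter_forall => j; have [->|ji] := eqVneq j i0.
  near=> eps => N; rewrite dotRD dotRZ Hv ler_int_addr //; near: eps.
  exact: near0_right_mulr_itv01 dotR_normal_gt0.
have [[n vj]|vZ] := pselect (exists n : int, lr j v = n%:~R); last first.
  apply: filterS (near_nonintegral_level (lr j a) vZ) => eps vj_eps N.
  by rewrite dotRD dotRZ.
have [c c_lt0 Aj] := integral_level_opposite_normal vj ji.
have ca_gt0 : 0 < - c * lr i0 a by rewrite mulr_gt0 ?dotR_normal_gt0 // oppr_gt0.
near=> eps => N; rewrite dotRD dotRZ vj ler_int.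
rewrite -(@ler_int_subr _ _ _ (eps * (- c * lr i0 a))).
  by rewrite Aj dotRZl; congr (_ <= _); ring.
near: eps; exact: near0_right_mulr_itv01 ca_gt0.
Unshelve. all: by end_near. Qed.

Lemma near_levels_minus : ~ opposite_normal ->
  \forall eps \near 0^'+, forall j (N : int),
    (lr j (v - eps *: a) <= N%:~R) = (lr j v <= N%:~R).
Proof.
move=> no_opp; apply: filter_forall => j; have [->|ji] := eqVneq j i0.
  near=> eps => N; rewrite dotRB dotRZ Hv ler_int ler_int_subr //; near: eps.
  exact: near0_right_mulr_itv01 dotR_normal_gt0.
have [[n vj]|vZ] := pselect (exists n : int, lr j v = n%:~R); last first.
  apply: filterS (near_nonintegral_level (- lr j a) vZ) => eps vj_eps N.
  by rewrite dotRB dotRZ -mulrN.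
have [c c_lt0 Aj] := integral_level_opposite_normal vj ji.
by case: no_opp; exists j, (- c); rewrite oppr_gt0 Aj scaleNr opprK.
Unshelve. all: by end_near. Qed.

Lemma near_shifts_notin_lattice : \forall eps \near 0^'+,
  forall z, intv R z != v + eps *: a /\ intv R z != v - eps *: a.
Proof.
near=> eps => z.
have e01 : 0 < eps * lr i0 a < 1.
  by near: eps; exact: near0_right_mulr_itv01 dotR_normal_gt0.
split; apply/eqP => /(congr1 (dotR a)); rewrite dotR_intv ?dotRB ?dotRD dotRZ Hv => zv.
  by have := int_addr_neq k (dotR (A i0) z) e01; rewrite zv eqxx.
by have := int_addr_neq (dotR (A i0) z) k e01; rewrite zv subrK eqxx.
Unshelve. all: by end_near. Qed.

(* Dilate a relative interior point q of F by a factor t for which the level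
   [b_i0 t + k] is attained by lattice points, and round t q + v to such a point
   at bounded distance; for large t the slack t (lr j q - b_j) absorbs the error. *)
Lemma facet_lattice_point : primitive (A i0) (b i0) -> exists t z, lattice_points F v t z.
Proof.
move=> prim; have [q [qi qj]] := facet_relint_point Hirr Hfull i0.
have A_neq0 := normal_neq0 Hirr Hfull i0.
have [B B_ge0 approx] := dotR_level_approx A_neq0 R.
pose K j := \sum_i `|intv R (A j) 0 i|.
pose T j := if j == i0 then 0%N else Num.bound (K j * B / (lr j q - (b j)%:~R)).
have [t [Tt [z0 az0]]] := primitive_levels A_neq0 prim (\max_j T j) k.
have t_gt0 : (0 < t)%N by apply: leq_ltn_trans Tt.
set y := t%:R *: q + v.
have ay : lr i0 y = (dotR (A i0) z0)%:~R.
  by rewrite dotRD dotRZ qi az0 Hv intrD intrM mulrC.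
have [z [az zy]] := approx _ y ay (ex_intro _ z0 erefl).
exists t, z; rewrite lattice_pointsI // lattice_points_polyhedron //.
rewrite lattice_points_hyperplane // az az0 addrAC subrr add0r; split=> // j.
have [->|ji] := eqVneq j i0; first by rewrite Hv az az0 addrAC subrr add0r.
have slack_gt0 : 0 < lr j q - (b j)%:~R by rewrite subr_gt0 qj.
have KB_lt : K j * B < t%:R * (lr j q - (b j)%:~R).
  have := leq_trans (leq_bigmax j) (ltnW Tt); rewrite /T (negbTE ji) => Tj.
  rewrite -ltr_pdivrMr //; apply: lt_le_trans (archi_boundP _) _; last by rewrite ler_nat.
  by rewrite divr_ge0 ?mulr_ge0 ?sumr_ge0 // ltW.
have := dotR_entry_bound (intv R (A j)) zy; rewrite ler_norml => /andP[err _].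
rewrite intrB intrM.
have -> : (dotR (A j) z)%:~R = lr j (intv R z - y) + t%:R * lr j q + lr j v.
  by rewrite dotRB dotR_intv /y dotRD dotRZ; ring.
by move: KB_lt; rewrite /K; lra.
Qed.

(* Without an opposite normal, every normal has an integral level at the lattice
   point v and hence equals a, so P would contain a ray in direction a. *)
Lemma lattice_point_opposite_normal : (exists z, intv R z = v) -> opposite_normal.
Proof.
move=> [z zv]; apply: contrapT => no_opp; have [M PM] := bounded_set_norm_le Hbdd.
have all_i0 j : j = i0.
  apply/eqP; apply: contraT => ji.
  have vj : lr j v = (dotR (A j) z)%:~R by rewrite -zv dotR_intv.
  have [c c_lt0 Aj] := integral_level_opposite_normal vj ji.
  by case: no_opp; exists j, (- c); rewrite oppr_gt0 Aj scaleNr opprK.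
have [p0 Pp0] := strict_interior_point Hirr Hfull.
have p0M : `|p0| <= M by apply: PM => j; exact: ltW.
have [s s_ge0 s_gt] : exists2 s : R, 0 <= s & M + `|p0| < s.
  by exists (M + `|p0| + 1); [have := normr_ge0 p0; lra | lra].
have /PM ray_le : P (p0 + s *: a).
  move=> j; rewrite (all_i0 j) dotRD dotRZ; have := Pp0 i0.
  have := mulr_ge0 s_ge0 (ltW dotR_normal_gt0); lra.
have a_ge1 : 1 <= `|a|.
  have [p ap] := rV0Pn _ (normal_neq0 Hirr Hfull i0).
  apply: le_trans (mx_entry_le_norm a 0 p).
  by rewrite mxE -intr_norm ler1z -abszE lez_nat absz_gt0.
have : `|s *: a| <= `|p0 + s *: a| + `|p0|.
  have sa : s *: a = (p0 + s *: a) - p0 by rewrite addrAC subrr add0r.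
  by rewrite {1}sa ler_normB.
by rewrite normrZ ger0_norm //; have := ler_peMr s_ge0 a_ge1; lra.
Qed.

Lemma lattice_points_shift_disjoint (eps : R) t : 0 < eps ->
  lattice_points P (v + eps *: a) t `&` lattice_points F v t = set0.
Proof.
move=> eps_gt0; apply/seteqP; split=> z // [[x Px zx] [y [_ Fy] zy]].
have := congr1 (dotR a) (etrans (esym zx) zy); rewrite !dotRD !dotRZ Fy.
have := ler_wpM2l (ler0n R t) (Px i0).
have := mulr_gt0 eps_gt0 dotR_normal_gt0; lra.
Qed.

Lemma lattice_points_shift_plus (eps : R) t :
  (forall j (N : int), (lr j (v + eps *: a) <= N%:~R) =
     (if j == i0 then k < N else lr j v <= N%:~R)) ->
  (forall z, intv R z != v + eps *: a) ->
  lattice_points P v t = lattice_points P (v + eps *: a) t `|` lattice_points F v t.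
Proof.
move=> levels notin; have P0 := polyhedron_neq0 Hfull.
have [->|t_gt0] := posnP t.
  rewrite (lattice_points0 v P0) (lattice_points0 (v + eps *: a) P0).
  rewrite (lattice_points0 v facet_neq0); apply/seteqP.
  by split=> z /=; [right|case=> // zv; have := notin z; rewrite zv eqxx].
apply/seteqP; split=> z /=.
  rewrite lattice_pointsI // !lattice_points_polyhedron // lattice_points_hyperplane //.
  move=> Pz; have := Pz i0; rewrite Hv ler_int le_eqVlt => /orP[/eqP kN|kN].
    by right; split=> //; rewrite kN.
  by left=> j; rewrite levels; case: eqVneq => [->|_] //; exact: Pz.
rewrite lattice_pointsI // !lattice_points_polyhedron //.
case=> [Pz j|[]//]; have := Pz j; rewrite levels.
by case: eqVneq => [->|_] //; rewrite Hv ler_int => /ltW.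
Qed.

Lemma lattice_points_shift_minus (eps : R) t :
  (forall j (N : int), (lr j (v - eps *: a) <= N%:~R) = (lr j v <= N%:~R)) ->
  (forall z, intv R z != v) -> (forall z, intv R z != v - eps *: a) ->
  lattice_points P v t = lattice_points P (v - eps *: a) t.
Proof.
move=> levels notin notin_eps; have [->|t_gt0] := posnP t.
  have P0 := polyhedron_neq0 Hfull.
  rewrite (lattice_points0 v P0) (lattice_points0 (v - eps *: a) P0); apply/seteqP.
  by split=> z /= zv; [have := notin z|have := notin_eps z]; rewrite zv eqxx.
apply/seteqP; split=> z /=; rewrite !lattice_points_polyhedron // => Pz j.
  by rewrite levels.
by rewrite -levels.
Qed.

Lemma TL_facet_neq0 : primitive (A i0) (b i0) -> exists t, TL F v t <> 0%N.
Proof.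
move=> prim; have [t [z Fz]] := facet_lattice_point prim; exists t.
have finF : finite_set (lattice_points F v t).
  apply: sub_finite_set (finite_lattice_points v t Hbdd) => y [x [Px _] yx].
  by exists x.
rewrite TLE => /eqP; rewrite cardfs_eq0 => /eqP /(fset_set_set0 finF) F0.
by rewrite F0 in Fz.
Qed.

Lemma near_TL_shift_plus : \forall eps \near 0^'+, forall t : nat,
  (TL P v t)%:Z - (TL P (v + eps *: a) t)%:Z = (TL F v t)%:Z.
Proof.
apply: filterS (filterI near_levels_plus
  (filterI near_shifts_notin_lattice (nbhs_right_gt 0))) => eps.
move=> [levels [notin eps_gt0]] t; rewrite !TLE.
have notin_plus z := (notin z).1.
rewrite (card_fset_setUI (finite_lattice_points v t Hbdd)
  (lattice_points_shift_plus t levels notin_plus)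
  (lattice_points_shift_disjoint t eps_gt0)).
by rewrite PoszD addrAC subrr add0r.
Qed.

Lemma near_TL_shift_minus : ~ opposite_normal ->
  \forall eps \near 0^'+, forall t : nat, TL P v t = TL P (v - eps *: a) t.
Proof.
move=> no_opp; have notin_v z : intv R z != v.
  by apply/eqP => zv; apply: no_opp; apply: lattice_point_opposite_normal; exists z.
apply: filterS (filterI (near_levels_minus no_opp) near_shifts_notin_lattice).
move=> eps [levels notin] t; rewrite !TLE (lattice_points_shift_minus t levels notin_v) //.
by move=> z; case: (notin z).
Qed.

End GenericPoint.

Theorem mainTheorem12 (R : realType) (d m : nat)
  (A : 'I_m -> 'rV[int]_d) (b : 'I_m -> int)
  (Hprim : forall i, primitive (A i) (b i))
  (Hirr : irredundant R A b)
  (Hbdd : bounded_set (polyhedron R A b))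
  (Hfull : (polyhedron R A b)° !=set0)
  (i0 : 'I_m) (k : int) (v : 'rV[R]_d)
  (Hv : hyperplane R (A i0) k v)
  (Hgen : forall (j : 'I_m) (k' : int),
      hyperplane R (A j) k' <> hyperplane R (A i0) k -> ~ hyperplane R (A j) k' v) :
  let P := polyhedron R A b in
  let F := P `&` hyperplane R (A i0) (b i0) in
  let a := intv R (A i0) in
  exists2 eps0 : R, 0 < eps0 & forall eps : R, 0 < eps < eps0 ->
    ((forall t : nat,
        (TL P v t)%:Z - (TL P (v + eps *: a) t)%:Z = (TL F v t)%:Z)
     /\ (exists t : nat, TL F v t <> 0%N))
    /\ ((~ exists (j : 'I_m) (c : R), 0 < c /\ intv R (A j) = - (c *: a)) ->
        forall t : nat, TL P v t = TL P (v - eps *: a) t).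
Proof.
move=> P F a.
pose opposite_normal := exists (j : 'I_m) (c : R), 0 < c /\ intv R (A j) = - (c *: a).
have near_minus : \forall eps \near 0^'+,
    ~ opposite_normal -> forall t, TL P v t = TL P (v - eps *: a) t.
  have [/(near_TL_shift_minus Hirr Hfull Hbdd Hv Hgen)|opp] := pselect (~ opposite_normal).
    by apply: filterS => eps + _.
  by apply: nearW => eps /opp.
have near_plus := near_TL_shift_plus Hirr Hfull Hbdd Hv Hgen.
have [eps0 eps0_gt0 small] := near0_right_exists (filterI near_plus near_minus).
exists eps0 => // eps /small[plus minus]; split=> //; split=> //.
by have [t Ft] := TL_facet_neq0 Hirr Hfull Hbdd Hv (Hprim i0); exists t.
Qed.
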